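(* Let $\mathbf{P}=(X,P)$ be a finite interval order, and let $\mathbf{I}$ be a distinguishing interval representation of $\mathbf{P}$ in which every interval has length $1$ except for one interval, whose length is between $0$ and $2$ inclusive. Then $\dim(\mathbf{P})\le 3$.
   Context: An interval representation of a poset $(X,P)$ assigns to each $x\in X$ a closed real interval $[l_x,r_x]$ such that $x<y$ in $P$ iff $r_x<l_y$; the length is $r_x-l_x$. A representation is distinguishing if no two intervals share an endpoint. The dimension $\dim(\mathbf{P})$ is the minimum number of linear extensions of $P$ whose intersection is $P$. *)

From HB Require Import structures.
From mathcomp Require Import all_boot all_order all_algebra.
From mathcomp Require Import reals.
Set Implicit Arguments. Unset Strict Implicit. Unset Printing Implicit Defensive.
Import Order.TTheory GRing.Theory Num.Theory.
Local Open Scope ring_scope.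

Definition interval_rep (R : realType) (X : finType) (lt : rel X)
    (l r : X -> R) : Prop :=
  (forall x, l x <= r x) /\ (forall x y, lt x y <-> r x < l y).

Definition distinguishing (R : realType) (X : finType) (l r : X -> R) : Prop :=
  forall x y, x != y ->
    [/\ l x != l y, r x != r y & l x != r y].

Definition linear_extension (X : finType) (lt L : rel X) : Prop :=
  [/\ (forall x, ~~ L x x),
      (forall x y z, L x y -> L y z -> L x z),
      (forall x y, x != y -> L x y || L y x)
    & (forall x y, lt x y -> L x y)].

Definition dim_le (X : finType) (lt : rel X) (k : nat) : Prop :=
  exists (t : nat) (L : 'I_t -> rel X),
    [/\ (t <= k)%N,
        (forall i, linear_extension lt (L i))
      & (forall x y, lt x y <-> (forall i, L i x y))].

(* Measure positions from the left end of the exceptional interval and cut the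
   line into unit blocks [k, k+1).  Two unit intervals with left ends p < q are
   incomparable iff q < p + 1: they lie in one block, or in adjacent blocks with
   q having the smaller fractional part.  Three real-valued keys reverse every
   such pair: the first lists the blocks in order but each block backwards, the
   other two superimpose each odd block on the even block below, resp. above
   it, and then order by position within the block.  The exceptional interval,
   of length at most 2, can be inserted into the three orders so that every
   interval meeting it comes before it in one order and after it in another. *)

From HB Require Import structures.
From mathcomp Require Import all_boot all_order all_algebra.
From mathcomp Require Import reals lra.
Set Implicit Arguments. Unset Strict Implicit. Unset Printing Implicit Defensive.
Import Order.TTheory GRing.Theory Num.Theory.
Local Open Scope ring_scope.

Lemma dim_le_of_keys (X : finType) (lt : rel X) (d : Order.disp_t)
    (T : orderType d) (t : nat) (K : 'I_t -> X -> T) :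
  (forall i, injective (K i)) ->
  (forall x y, lt x y <-> (forall i, (K i x < K i y)%O)) ->
  dim_le lt t.
Proof.
move=> K_inj lt_keys; exists t, (fun i x y => (K i x < K i y)%O); split=> //.
- move=> i; split.
  + by move=> x; rewrite ltxx.
  + by move=> x y z; apply: lt_trans.
  + by move=> x y; rewrite -(inj_eq (K_inj i)); apply: lt_total.
  + by move=> x y /lt_keys.
Qed.

Lemma int_num_trichotomy (R : archiRealDomainType) (x y : R) :
  x \is a Num.int -> y \is a Num.int -> x + 1 <= y \/ x = y \/ y + 1 <= x.
Proof.
move=> xi yi; case: (eqVneq x y) => [|x_ne_y]; first by right; left.
have := norm_intr_ge1 (rpredB yi xi); rewrite subr_eq0 eq_sym => /(_ x_ne_y).
by rewrite real_ler_normr ?num_real // => /orP[] ?; lra.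
Qed.

Section UnitKeys.
Variable R : realType.

Definition half_floor (p : R) : R := (Num.floor (p / 2))%:~R.

Lemma half_floor_trichotomy (p q : R) : half_floor p + 1 <= half_floor q \/
  half_floor p = half_floor q \/ half_floor q + 1 <= half_floor p.
Proof. exact: int_num_trichotomy (intr_int _ _) (intr_int _ _). Qed.

Lemma half_floor_bounds (p : R) : 2 * half_floor p <= p < 2 * half_floor p + 2.
Proof.
have /andP[lo hi] := floor_itv (p / 2); rewrite intrD in hi.
by rewrite /half_floor; apply/andP; split; lra.
Qed.

Lemma half_floor_cases (q : R) :
  half_floor q <= -2 \/ half_floor q = -1 \/ half_floor q = 0 \/ 1 <= half_floor q.
Proof.
have int_q : half_floor q \is a Num.int := intr_int _ _.
have int_m1 : (-1 : R) \is a Num.int by rewrite rpredN int_num1.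
have := int_num_trichotomy int_q (int_num0 R).
have := int_num_trichotomy int_q int_m1; lra.
Qed.

Definition odd_block (p : R) : bool := 2 * half_floor p + 1 <= p.

(* With k = floor p (odd_block p says that k is odd): key 0 is 3k - p, which
   keeps the blocks [k, k+1) in order but reverses each of them; keys 1 and 2
   move odd blocks one unit down, resp. up, onto an even block. *)
Definition unit_key (i : 'I_3) (p : R) : R :=
  match val i with
  | 0 => if odd_block p then 6 * half_floor p + 3 - p else 6 * half_floor p - p
  | 1 => if odd_block p then p - 1 else p
  | _ => if odd_block p then p + 1 else p
  end.

Lemma unit_key_mono i (p q : R) : p + 1 < q -> unit_key i p < unit_key i q.
Proof.
have /andP[? ?] := half_floor_bounds p; have /andP[? ?] := half_floor_bounds q.
have := half_floor_trichotomy p q.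
rewrite /unit_key /odd_block; case: i => [[|[|[|//]]] _] /=;
  case: (leP _ p); case: (leP _ q); lra.
Qed.

Lemma unit_key_inj i (p q : R) :
  q != p + 1 -> p != q + 1 -> unit_key i p = unit_key i q -> p = q.
Proof.
rewrite !neq_lt => /orP ? /orP ?.
have /andP[? ?] := half_floor_bounds p; have /andP[? ?] := half_floor_bounds q.
have := half_floor_trichotomy p q.
rewrite /unit_key /odd_block; case: i => [[|[|[|//]]] _] /=;
  case: (leP _ p); case: (leP _ q); lra.
Qed.

Lemma unit_key_lt_iff (p q : R) : q != p + 1 -> p != q + 1 ->
  p + 1 < q <-> (forall i, unit_key i p < unit_key i q).
Proof.
rewrite !neq_lt => /orP ? /orP ?; split=> [? i|all_lt]; first exact: unit_key_mono.
have := all_lt ord0; have := all_lt (inord 1); have := all_lt ord_max.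
have /andP[? ?] := half_floor_bounds p; have /andP[? ?] := half_floor_bounds q.
have := half_floor_trichotomy p q.
rewrite /unit_key /odd_block /= inordK //=; case: (leP _ p); case: (leP _ q); lra.
Qed.

End UnitKeys.

Section LongKey.
Variables (R : realType) (lam : R).
Hypothesis lam_bounds : 0 <= lam <= 2.

(* Key 0 puts the long interval between the blocks k <= -2 and k = -1; keys 1
   and 2 put it either in a gap between two superimposed blocks or where a unit
   interval with left end lam - 1, resp. lam, would be. *)
Definition long_key (i : 'I_3) : R :=
  match val i with
  | 0 => -7/2
  | 1 => if lam <= 1 then -1/2 else lam - 1
  | _ => if lam <= 1 then lam else 3/2
  end.

Lemma long_key_neq i (q : R) :
  q != lam -> q != lam - 1 -> unit_key i q <> long_key i.
Proof.
rewrite !neq_lt => /orP ? /orP ?.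
have /andP[? ?] := lam_bounds; have /andP[? ?] := half_floor_bounds q.
have := half_floor_cases q.
rewrite /unit_key /long_key /odd_block; case: i => [[|[|[|//]]] _] /=;
  case: (leP _ q); case: (leP lam 1); lra.
Qed.

Lemma long_key_lt_iff (q : R) :
  q != lam -> lam < q <-> (forall i, long_key i < unit_key i q).
Proof.
rewrite neq_lt => /orP ?; have /andP[? ?] := lam_bounds.
have /andP[? ?] := half_floor_bounds q; have := half_floor_cases q.
split=> [? i|all_lt].
  rewrite /unit_key /long_key /odd_block; case: i => [[|[|[|//]]] _] /=;
    case: (leP _ q); case: (leP lam 1); lra.
have := all_lt ord0; have := all_lt (inord 1); have := all_lt ord_max.
rewrite /unit_key /long_key /odd_block /= inordK //=;
  case: (leP _ q); case: (leP lam 1); lra.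
Qed.

Lemma lt_long_key_iff (q : R) :
  q + 1 < 0 <-> (forall i, unit_key i q < long_key i).
Proof.
have /andP[? ?] := lam_bounds; have /andP[? ?] := half_floor_bounds q.
have := half_floor_cases q.
split=> [? i|all_lt].
  rewrite /unit_key /long_key /odd_block; case: i => [[|[|[|//]]] _] /=;
    case: (leP _ q); case: (leP lam 1); lra.
have := all_lt ord0; rewrite /unit_key /long_key /odd_block /=; case: (leP _ q); lra.
Qed.

End LongKey.

Section IntervalKeys.
Variables (R : realType) (X : finType) (lt : rel X) (l r : X -> R) (x0 : X).
Hypothesis rep : interval_rep lt l r.
Hypothesis dist : distinguishing l r.
Hypothesis long_len : 0 <= r x0 - l x0 <= 2.
Hypothesis unit_len : forall x, x != x0 -> r x - l x = 1.

Local Notation pos x := (l x - l x0).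
Local Notation lam := (r x0 - l x0).

Definition interval_key (i : 'I_3) (x : X) : R :=
  if x == x0 then long_key lam i else unit_key i (pos x).

Lemma unit_right_end x : x != x0 -> r x = l x + 1.
Proof. by move/unit_len => len_x; rewrite -len_x addrC subrK. Qed.

Lemma pos_neq_unit_right_end x y : x != x0 -> pos y != pos x + 1.
Proof.
move=> x_ne; rewrite addrAC -unit_right_end // (inj_eq (addIr _)).
case: (eqVneq y x) => [->|/dist[_ _ //]].
by rewrite unit_right_end // lt_eqF // ltrDl ltr01.
Qed.

Lemma pos_neq_long_ends x : x != x0 -> pos x != lam /\ pos x != lam - 1.
Proof.
move=> x_ne; have [_ ne_r ne_lr] := dist x_ne; have := unit_right_end x_ne.
by split; [apply: contra_neq ne_lr | apply: contra_neq ne_r] => ?; lra.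
Qed.

Lemma interval_key_inj i : injective (interval_key i).
Proof.
move=> x y; rewrite /interval_key.
case: (eqVneq x x0) => [->|x_ne]; case: (eqVneq y x0) => [->|y_ne] // eq_key.
- have [? ?] := pos_neq_long_ends y_ne.
  by case: (long_key_neq long_len _ _ (esym eq_key)).
- have [? ?] := pos_neq_long_ends x_ne.
  by case: (long_key_neq long_len _ _ eq_key).
- case: (eqVneq x y) => // /dist[/eqP ne_l _ _]; case: ne_l.
  apply: (addIr (- l x0)); apply: (unit_key_inj _ _ eq_key);
  exact: pos_neq_unit_right_end.
Qed.

Lemma lt_iff_interval_key_lt x y :
  lt x y <-> (forall i, interval_key i x < interval_key i y).
Proof.
have [_ ->] := rep; rewrite /interval_key -(ltrD2r (- l x0)).
case: (eqVneq x x0) => [->|x_ne]; case: (eqVneq y x0) => [->|y_ne].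
- rewrite subrr ltNge (andP long_len).1; split=> // /(_ ord0); by rewrite ltxx.
- by apply: long_key_lt_iff => //; case: (pos_neq_long_ends y_ne).
- by rewrite subrr unit_right_end // addrAC; apply: lt_long_key_iff.
- rewrite unit_right_end // addrAC; apply: unit_key_lt_iff;
  exact: pos_neq_unit_right_end.
Qed.

End IntervalKeys.

Theorem theorem7p1 (R : realType) (X : finType) (lt : rel X)
    (l r : X -> R) (x0 : X) :
  (forall x, ~~ lt x x) ->
  (forall x y z, lt x y -> lt y z -> lt x z) ->
  interval_rep lt l r ->
  distinguishing l r ->
  0 <= r x0 - l x0 <= 2 ->
  (forall x, x != x0 -> r x - l x = 1) ->
  dim_le lt 3.
Proof.
(* Irreflexivity and transitivity of lt already follow from the representation. *)
move=> _ _ rep dist long_len unit_len.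
exact: (dim_le_of_keys (interval_key_inj dist long_len unit_len)
                       (lt_iff_interval_key_lt rep dist long_len unit_len)).
Qed.
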